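(* Let $K$ be a commutative ring with identity, $n\ge 0$, and let $A,D$ be $K$-algebras. (i) If $D$ is a retract of $A$, i.e. there are $K$-algebra homomorphisms $\kappa:A\to D$, $\theta:D\to A$ with $\kappa\theta=\mathrm{id}_D$, and $A$ is bi-$FP_n$, then $D$ is bi-$FP_n$. (ii) Suppose $A$ and $D$ have augmentations $\varepsilon:A\to K$, $\varepsilon_D:D\to K$, and $D$ is an augmented retract of $A$, i.e. there exist $\kappa,\theta$ as in (i) with additionally $\varepsilon_D\kappa=\varepsilon$. If $A$ is left-$FP_n$ (resp. right-$FP_n$, weak bi-$FP_n$), then so is $D$.
   Context: An augmentation of a $K$-algebra is a $K$-algebra epimorphism onto $K$. A module is of type $FP_n$ if there is an exact sequence $0\leftarrow M\leftarrow P_0\leftarrow\cdots\leftarrow P_n$ with $P_0,\dots,P_n$ finitely generated free modules. For an augmented algebra $A$, left-$FP_n$ (resp. right-$FP_n$) means $K$ as a left (resp. right) $A$-module via the augmentation is of type $FP_n$. An $(A,A)$-bimodule is an abelian group with left and right $A$-actions satisfying $(am)b=a(mb)$ and $km=mk$ for $k\in K$; a free bimodule of rank $r$ is a direct sum of $r$ copies of $A\otimes_K A$ with action $a(u\otimes v)b=au\otimes vb$. $A$ is weak bi-$FP_n$ if $K$ as a bimodule via $a\cdot k\cdot a'=\varepsilon(a)k\varepsilon(a')$ has a partial resolution $0\leftarrow K\leftarrow F_0\leftarrow\cdots\leftarrow F_n$ by finitely generated free bimodules; $A$ is bi-$FP_n$ if $A$ as a bimodule by left and right multiplication has such a partial resolution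 $0\leftarrow A\leftarrow F_0\leftarrow\cdots\leftarrow F_n$. *)

From HB Require Import structures.
From mathcomp Require Import all_boot all_algebra.
Set Implicit Arguments. Unset Strict Implicit. Unset Printing Implicit Defensive.
Import GRing.Theory.
Local Open Scope ring_scope.

Definition left_linear (R : pzRingType) (M N : zmodType)
    (actM : R -> M -> M) (actN : R -> N -> N) (f : M -> N) : Prop :=
  (forall x y, f (x + y) = f x + f y) /\ (forall a x, f (actM a x) = actN a (f x)).

(** The free left [R]-module of rank [m] is the row space ['rV[R]_m] with
    [a *: v] (entrywise left multiplication by [a]). *)
Definition left_FPn (R : pzRingType) (n : nat) (M : zmodType)
    (act : R -> M -> M) : Prop :=
  exists (m : nat -> nat) (d : forall i : nat, 'rV[R]_(m i.+1) -> 'rV[R]_(m i))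
         (g : 'rV[R]_(m 0%N) -> M),
    [/\ left_linear ( *:%R) act g,
        (forall i, (i < n)%N -> left_linear ( *:%R) ( *:%R) (d i)),
        (forall x : M, exists v, g v = x),
        ((0 < n)%N -> forall v, g v = 0 <-> exists w, d 0%N w = v) &
        (forall i, (i.+1 < n)%N ->
           forall v : 'rV[R]_(m i.+1), d i v = 0 <-> exists w, d i.+1 w = v)].

Definition augmentation (K : comNzRingType) (A : algType K)
    (eps : {lrmorphism A -> K^o}) : Prop :=
  forall k : K, exists a : A, eps a = k.

Definition leftFPn (K : comNzRingType) (A : algType K)
    (eps : {lrmorphism A -> K^o}) (n : nat) : Prop :=
  @left_FPn A n K (fun a k => (eps a : K) * k).

(** A right A-module is a left module over the converse ring A^c
    (a *_{A^c} b = b * a); the free right module A^m is ['rV[A^c]_m], on which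
    [a *: v] multiplies every entry of [v] on the right by [a]. *)
Definition rightFPn (K : comNzRingType) (A : algType K)
    (eps : {lrmorphism A -> K^o}) (n : nat) : Prop :=
  @left_FPn A^c n K (fun (a : A^c) (k : K) => k * (eps (a : A) : K)).

Definition is_bimodule (K : comNzRingType) (A : algType K) (M : zmodType)
    (l : A -> M -> M) (r : M -> A -> M) : Prop :=
  ((forall a x y, l a (x + y) = l a x + l a y) /\
   (forall a b x, l (a + b) x = l a x + l b x) /\
   (forall a b x, l (a * b) x = l a (l b x)) /\
   (forall x, l 1 x = x)) /\
  ((forall a x y, r (x + y) a = r x a + r y a) /\
   (forall a b x, r x (a + b) = r x a + r x b) /\
   (forall a b x, r x (a * b) = r (r x a) b) /\
   (forall x, r x 1 = x)) /\
  (forall a b x, r (l a x) b = l a (r x b)) /\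
  (forall (k : K) x, l (k%:A) x = r x (k%:A)).

Definition bimod_hom (K : comNzRingType) (A : algType K) (M N : zmodType)
    (lM : A -> M -> M) (rM : M -> A -> M) (lN : A -> N -> N) (rN : N -> A -> N)
    (f : M -> N) : Prop :=
  [/\ (forall x y, f (x + y) = f x + f y),
      (forall a x, f (lM a x) = lN a (f x)) &
      (forall a x, f (rM x a) = rN (f x) a)].

(** (F, l, r) is a free bimodule of rank [rk]: it is a bimodule with elements
    e_0, ..., e_(rk-1) that freely generate it, i.e. for every bimodule N and
    every family n_0, ..., n_(rk-1) of elements of N there is a unique bimodule
    homomorphism F -> N with e_i |-> n_i.  (This is the universal property of
    the direct sum of rk copies of A (x)_K A, with e_i = 1 (x) 1 in the i-th
    summand; it determines F up to isomorphism.) *)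
Definition free_bimodule (K : comNzRingType) (A : algType K) (F : zmodType)
    (l : A -> F -> F) (r : F -> A -> F) (rk : nat) : Prop :=
  is_bimodule l r /\
  exists e : 'I_rk -> F,
    forall (N : zmodType) (lN : A -> N -> N) (rN : N -> A -> N),
      is_bimodule lN rN ->
      forall nv : 'I_rk -> N,
        exists f : F -> N,
          [/\ bimod_hom l r lN rN f,
              (forall i, f (e i) = nv i) &
              (forall f' : F -> N, bimod_hom l r lN rN f' ->
                 (forall i, f' (e i) = nv i) -> forall x, f' x = f x)].

Definition bimod_FPn (K : comNzRingType) (A : algType K) (n : nat)
    (M : zmodType) (lM : A -> M -> M) (rM : M -> A -> M) : Prop :=
  exists (F : nat -> zmodType) (lF : forall i, A -> F i -> F i)
         (rF : forall i, F i -> A -> F i)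
         (d : forall i : nat, F i.+1 -> F i) (g : F 0%N -> M),
    (forall i, (i <= n)%N -> exists rk, free_bimodule (lF i) (rF i) rk) /\
    [/\ bimod_hom (lF 0%N) (rF 0%N) lM rM g,
        (forall i, (i < n)%N ->
           bimod_hom (lF i.+1) (rF i.+1) (lF i) (rF i) (d i)),
        (forall x : M, exists v, g v = x),
        ((0 < n)%N -> forall v, g v = 0 <-> exists w, d 0%N w = v) &
        (forall i, (i.+1 < n)%N ->
           forall v : F i.+1, d i v = 0 <-> exists w, d i.+1 w = v)].

Definition biFPn (K : comNzRingType) (A : algType K) (n : nat) : Prop :=
  @bimod_FPn K A n A (fun a x => a * x) (fun x b => x * b).

Definition weak_biFPn (K : comNzRingType) (A : algType K)
    (eps : {lrmorphism A -> K^o}) (n : nat) : Prop :=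
  @bimod_FPn K A n K (fun a k => (eps a : K) * k) (fun k a => k * (eps a : K)).

From HB Require Import structures.
From mathcomp Require Import all_boot all_algebra.
From Stdlib Require Import IndefiniteDescription.
Set Implicit Arguments. Unset Printing Implicit Defensive.
Import GRing.Theory.
Local Open Scope ring_scope.

(* Let [kappa : A -> D] and [theta : D -> A] exhibit [D] as a retract of [A], let [N'] be
   an [A]-module, [N] a [D]-module and [p : N' -> N] a map along [kappa] with a section
   [sig] along [theta] ([N' = A], [N = D] for (i); [N' = N = K] for (ii)).  Base change
   along [kappa] turns a resolution [E -> N'] by finitely generated free [A]-modules into
   a complex [C -> N] of finitely generated free [D]-modules with a chain map [E -> C]
   over [p]; [C] need not be exact, but it suffices.  If [Q -> N] is a free resolution
   up to degree [k], comparison maps [Q -> E -> C -> Q] compose to a chain map [gam] over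
   the identity, so [id - gam = d h + h d]; then [Q k.+1 := Q k * C k.+1] maps onto the
   cycles of [Q k], and the resolution extends. *)

Lemma morphD_0 {M N : zmodType} {f : M -> N} : {morph f : x y / x + y} -> f 0 = 0.
Proof. by move=> fD; apply: (addrI (f 0)); rewrite -fD !addr0. Qed.

Lemma morphD_N {M N : zmodType} {f : M -> N} : {morph f : x y / x + y} -> {morph f : x / - x}.
Proof. by move=> fD x; apply: (addrI (f x)); rewrite -fD !subrr (morphD_0 fD). Qed.

Lemma morphD_B {M N : zmodType} {f : M -> N} : {morph f : x y / x + y} -> {morph f : x y / x - y}.
Proof. by move=> fD x y; rewrite fD (morphD_N fD). Qed.

Lemma morphD_sum {M N : zmodType} {f : M -> N} : {morph f : x y / x + y} ->
  forall I r (P : pred I) F, f (\sum_(i <- r | P i) F i) = \sum_(i <- r | P i) f (F i).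
Proof. by move=> fD I r P F; apply: (big_morph f fD (morphD_0 fD)). Qed.

Section FamilyUpdate.
Variable T : nat -> Type.

Definition upd (f : forall i, T i) (j : nat) (x : T j) : forall i, T i :=
  fun i => match i =P j with ReflectT e => eq_rect_r T x e | ReflectF _ => f i end.
Arguments upd : clear implicits.

Lemma upd_eq f j x : upd f j x j = x.
Proof. by rewrite /upd; case: eqP => // e; rewrite (eq_axiomK e). Qed.

Lemma upd_lt f j x i : (i < j)%N -> upd f j x i = f i.
Proof. by move=> lt_ij; rewrite /upd; case: eqP => // e; exfalso; move: lt_ij; rewrite e ltnn. Qed.

Lemma upd_extend (P : forall i, T i -> Prop) f j x :
  (forall i, (i < j)%N -> P i (f i)) -> P j x ->
  forall i, (i <= j)%N -> P i (upd f j x i).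
Proof.
move=> Pf Px i; rewrite leq_eqVlt => /orP[/eqP->|lt_ij]; first by rewrite upd_eq.
by rewrite upd_lt //; apply: Pf.
Qed.

End FamilyUpdate.
Arguments upd {T} f j x i.
Arguments upd_eq {T} f j x.
Arguments upd_lt {T f j x i}.
Arguments upd_extend {T} P {f j x}.

(** * Augmented complexes *)

Definition cycle_at {X : nat -> zmodType} {M : zmodType} (d : forall i, X i.+1 -> X i)
    (g : X 0%N -> M) {i : nat} : X i -> Prop :=
  match i return X i -> Prop with
  | 0 => fun v => g v = 0
  | i'.+1 => fun v => d i' v = 0
  end.

Definition complex_upto {X : nat -> zmodType} {M : zmodType} (d : forall i, X i.+1 -> X i)
    (g : X 0%N -> M) (j : nat) :=
  forall i, (i < j)%N -> forall w, cycle_at d g (d i w).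

Definition exact_upto {X : nat -> zmodType} {M : zmodType} (d : forall i, X i.+1 -> X i)
    (g : X 0%N -> M) (j : nat) :=
  forall i, (i < j)%N -> forall v, cycle_at d g v -> exists w, d i w = v.

Lemma complex_upto_le {X : nat -> zmodType} {M : zmodType} d (g : X 0%N -> M) j j' :
  (j' <= j)%N -> complex_upto d g j -> complex_upto d g j'.
Proof. by move=> le_j'j cx i lt_ij'; apply: cx; apply: leq_trans le_j'j. Qed.

Lemma exact_upto_le {X : nat -> zmodType} {M : zmodType} d (g : X 0%N -> M) j j' :
  (j' <= j)%N -> exact_upto d g j -> exact_upto d g j'.
Proof. by move=> le_j'j ex i lt_ij'; apply: ex; apply: leq_trans le_j'j. Qed.

Lemma complex_upto_comp {X : nat -> zmodType} {M M' : zmodType} d (g : X 0%N -> M)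
    (s : M -> M') j :
  s 0 = 0 -> complex_upto d g j -> complex_upto d (s \o g) j.
Proof. by move=> s0 cx [|i] lt_ij w /=; [rewrite (cx 0%N lt_ij w) | exact: (cx i.+1)]. Qed.

Lemma complex_upto_image {E C : nat -> zmodType} {NE NC : zmodType}
    {dE : forall i, E i.+1 -> E i} {gE : E 0%N -> NE}
    {dC : forall i, C i.+1 -> C i} {gC : C 0%N -> NC}
    {pr : forall i, E i -> C i} {q : NE -> NC} {n : nat} :
  q 0 = 0 -> (forall i, (i <= n)%N -> pr i 0 = 0) ->
  (forall i, (i <= n)%N -> forall y, exists x, pr i x = y) ->
  (forall x, gC (pr 0%N x) = q (gE x)) ->
  (forall i, (i < n)%N -> forall x, dC i (pr i.+1 x) = pr i (dE i x)) ->
  complex_upto dE gE n -> complex_upto dC gC n.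
Proof.
move=> q0 pr0 pr_onto gC_pr dC_pr cxE [|i] lt_in y /=; have [x <-] := pr_onto _ lt_in y.
  by rewrite dC_pr // gC_pr (cxE 0%N lt_in x) q0.
have lt_in' := ltnW lt_in.
rewrite !dC_pr //; have /= -> := cxE i.+1 lt_in x.
exact/pr0/ltnW.
Qed.

Lemma exact_complex_uptoP {X : nat -> zmodType} {M : zmodType} d (g : X 0%N -> M) n :
  exact_upto d g n /\ complex_upto d g n <->
  ((0 < n)%N -> forall v, g v = 0 <-> exists w, d 0%N w = v) /\
  (forall i, (i.+1 < n)%N -> forall v, d i v = 0 <-> exists w, d i.+1 w = v).
Proof.
split=> [[ex cx]|[ex0 exS]].
  split=> [lt0n v|i lt_in v]; split.
  - exact: ex 0%N lt0n v.
  - by case=> w <-; apply: cx 0%N lt0n w.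
  - exact: ex i.+1 lt_in v.
  - by case=> w <-; apply: cx i.+1 lt_in w.
split=> [[|i] lt_in v|[|i] lt_in w] /=.
- by case: (ex0 lt_in v).
- by case: (exS i lt_in v).
- by apply/(ex0 lt_in); exists w.
- by apply/(exS i lt_in); exists w.
Qed.

Section ConjugateComplex.
Variables (X Y : nat -> zmodType) (M : zmodType).
Variables (dX : forall i, X i.+1 -> X i) (gX : X 0%N -> M).
Variables (phi : forall i, X i -> Y i) (phi' : forall i, Y i -> X i) (n : nat).
Hypotheses (phiD : forall i, (i <= n)%N -> {morph phi i : x y / x + y})
  (phiK : forall i, (i <= n)%N -> cancel (phi i) (phi' i))
  (phi'K : forall i, (i <= n)%N -> cancel (phi' i) (phi i)).

Let dY i (v : Y i.+1) : Y i := phi i (dX i (phi' i.+1 v)).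
Let gY (v : Y 0%N) : M := gX (phi' 0%N v).

Lemma cycle_at_conj i (v : Y i) : (i <= n)%N ->
  cycle_at dY gY v <-> cycle_at dX gX (phi' i v).
Proof.
case: i v => [|i] v le_in /=; first exact: iff_refl.
have le_in' := ltnW le_in; have phi0 := morphD_0 (phiD i le_in').
rewrite /dY; split=> [/(congr1 (phi' i))|->]; last exact: phi0.
by rewrite phiK // => ->; rewrite -phi0 phiK.
Qed.

Lemma exact_complex_upto_conj : exact_upto dX gX n -> complex_upto dX gX n ->
  exact_upto dY gY n /\ complex_upto dY gY n.
Proof.
move=> exX cxX; split=> [i lt_in v|i lt_in w]; have le_in := ltnW lt_in.
  move/(cycle_at_conj _ _ le_in)/(exX i lt_in) => [w wE].
  by exists (phi i.+1 w); rewrite /dY phiK // wE phi'K.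
by apply/(cycle_at_conj _ _ le_in); rewrite /dY phiK //; apply: cxX.
Qed.

End ConjugateComplex.
Arguments exact_complex_upto_conj {X Y M dX gX phi phi' n}.

(** * Free resolutions in an abstract category of modules *)

(* [Act M] is the type of module structures on the abelian group [M]; [free] singles out
   the finitely generated free modules, which enter only through [free_lift] and
   [free_prod]. *)
Section ModuleCategory.
Variable Act : zmodType -> Type.
Variable is_mod : forall M : zmodType, Act M -> Prop.
Variable hom : forall M N : zmodType, Act M -> Act N -> (M -> N) -> Prop.
Variable free : forall M : zmodType, Act M -> Prop.
Variable act_prod : forall M1 M2 : zmodType, Act M1 -> Act M2 -> Act (M1 * M2)%type.
Arguments is_mod {M}.
Arguments hom {M N}.
Arguments free {M}.
Arguments act_prod {M1 M2}.

Hypothesis homD : forall {M N} {aM : Act M} {aN : Act N} {f},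
  hom aM aN f -> {morph f : x y / x + y}.
Hypothesis hom_id : forall {M} (aM : Act M), hom aM aM id.
Hypothesis hom_comp : forall {M N P} {aM : Act M} {aN : Act N} {aP : Act P} {f g},
  hom aM aN f -> hom aN aP g -> hom aM aP (g \o f).
Hypothesis hom_add : forall {M N} {aM : Act M} {aN : Act N} {f g}, is_mod aN ->
  hom aM aN f -> hom aM aN g -> hom aM aN (fun x => f x + g x).
Hypothesis hom_opp : forall {M N} {aM : Act M} {aN : Act N} {f}, is_mod aN ->
  hom aM aN f -> hom aM aN (fun x => - f x).
Hypothesis hom0 : forall {M N} (aM : Act M) {aN : Act N}, is_mod aN ->
  hom aM aN (fun _ => 0).
Hypothesis free_mod : forall {M} {aM : Act M}, free aM -> is_mod aM.
Hypothesis free_lift : forall {F X Y} {aF : Act F} {aX : Act X} {aY : Act Y} {s f},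
  free aF -> is_mod aX -> is_mod aY -> hom aX aY s -> hom aF aY f ->
  (forall u, exists x, s x = f u) ->
  exists a, hom aF aX a /\ forall u, s (a u) = f u.
Hypothesis free_prod : forall {M1 M2} {a1 : Act M1} {a2 : Act M2},
  free a1 -> free a2 -> free (act_prod a1 a2).
Hypothesis hom_fst : forall {M1 M2} (a1 : Act M1) (a2 : Act M2),
  hom (act_prod a1 a2) a1 fst.
Hypothesis hom_snd : forall {M1 M2} (a1 : Act M1) (a2 : Act M2),
  hom (act_prod a1 a2) a2 snd.

Lemma hom_sub {M N} {aM : Act M} {aN : Act N} {f g} : is_mod aN ->
  hom aM aN f -> hom aM aN g -> hom aM aN (fun x => f x - g x).
Proof. by move=> modN hf hg; apply: hom_add => //; apply: hom_opp. Qed.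

Lemma cycle_atD {X : nat -> zmodType} {N : zmodType} {aX : forall i, Act (X i)} {aN : Act N}
    {dX} {gX : X 0%N -> N} {i} {x y : X i} :
  hom (aX 0%N) aN gX -> (forall i', (i' < i)%N -> hom (aX i'.+1) (aX i') (dX i')) ->
  cycle_at dX gX x -> cycle_at dX gX y -> cycle_at dX gX (x + y).
Proof.
case: i x y => [|i] x y /= hom_gX hom_dX cx cy; first by rewrite (homD hom_gX) cx cy addr0.
by rewrite (homD (hom_dX i _)) // cx cy addr0.
Qed.

Lemma chain_map_cycle {X Y : nat -> zmodType} {NX NY : zmodType}
    {aX : forall i, Act (X i)} {aY : forall i, Act (Y i)}
    {dX} {gX : X 0%N -> NX} {dY} {gY : Y 0%N -> NY} {f : forall i, X i -> Y i} {j} :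
  (forall i, (i <= j)%N -> hom (aX i) (aY i) (f i)) ->
  (forall v, gX v = 0 -> gY (f 0%N v) = 0) ->
  (forall i, (i < j)%N -> forall u, dY i (f i.+1 u) = f i (dX i u)) ->
  forall i, (i <= j)%N -> forall v, cycle_at dX gX v -> cycle_at dY gY (f i v).
Proof.
move=> hom_f f0 f_chain [|i] le_ij v /=; first exact: f0.
by move=> cv; rewrite f_chain // cv (morphD_0 (homD (hom_f i _))) // ltnW.
Qed.

Section Comparison.
Variables (X Y : nat -> zmodType) (N : zmodType).
Variables (aX : forall i, Act (X i)) (aY : forall i, Act (Y i)) (aN : Act N).
Variables (dX : forall i, X i.+1 -> X i) (gX : X 0%N -> N).
Variables (dY : forall i, Y i.+1 -> Y i) (gY : Y 0%N -> N).
Variable j : nat.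
Hypotheses (freeX : forall i, (i <= j)%N -> free (aX i))
  (modY : forall i, (i <= j)%N -> is_mod (aY i)) (modN : is_mod aN).
Hypotheses (hom_dX : forall i, (i < j)%N -> hom (aX i.+1) (aX i) (dX i))
  (hom_dY : forall i, (i < j)%N -> hom (aY i.+1) (aY i) (dY i))
  (hom_gX : hom (aX 0%N) aN gX) (hom_gY : hom (aY 0%N) aN gY).
Hypotheses (cxX : complex_upto dX gX j) (exY : exact_upto dY gY j)
  (gY_onto : forall u, exists y, gY y = gX u).

Definition chain_map_upto (f : forall i, X i -> Y i) k :=
  [/\ forall i, (i <= k)%N -> hom (aX i) (aY i) (f i),
      forall u, gY (f 0%N u) = gX u &
      forall i, (i < k)%N -> forall u, dY i (f i.+1 u) = f i (dX i u)].

Lemma chain_map_upto0 : exists f, chain_map_upto f 0.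
Proof.
have [f0 [hom_f0 f0E]] := free_lift (freeX 0 isT) (modY 0 isT) modN hom_gY hom_gX gY_onto.
exists (upd (fun i (_ : X i) => 0 : Y i) 0%N f0).
by split=> [[|i] // _|u|//]; rewrite upd_eq.
Qed.

Lemma chain_map_uptoS k f : (k < j)%N -> chain_map_upto f k ->
  exists f', chain_map_upto f' k.+1.
Proof.
move=> lt_kj [hom_f f0E f_chain].
have f_cycle u : cycle_at dY gY (f k (dX k u)).
  apply: (chain_map_cycle hom_f _ f_chain k (leqnn k)); last exact: cxX.
  by move=> v gv0; rewrite f0E.
have [a [hom_a aE]] := free_lift (freeX k.+1 lt_kj) (modY k.+1 lt_kj) (modY k (ltnW lt_kj))
  (hom_dY k lt_kj) (hom_comp (hom_dX k lt_kj) (hom_f k (leqnn k)))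
  (fun u => exY k lt_kj _ (f_cycle u)).
exists (upd f k.+1 a); split.
- exact: (@upd_extend _ (fun i => hom (aX i) (aY i)) f k.+1 a hom_f hom_a).
- by move=> u; rewrite upd_lt.
- move=> i; rewrite ltnS leq_eqVlt => /orP[/eqP->|lt_ik] u.
    by rewrite upd_eq upd_lt // aE.
  by rewrite !upd_lt ?f_chain //; apply: ltnW.
Qed.

Lemma comparison : exists f, chain_map_upto f j.
Proof.
suff: forall k, (k <= j)%N -> exists f, chain_map_upto f k by apply.
elim=> [|k IHk] le_kj; first exact: chain_map_upto0.
by have [f fk] := IHk (ltnW le_kj); apply: chain_map_uptoS fk.
Qed.

End Comparison.
Arguments chain_map_upto {X Y N} aX aY dX gX dY gY f k.

Definition hd {X : nat -> zmodType} (dX : forall i, X i.+1 -> X i)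
    (h : forall i, X i -> X i.+1) {i : nat} : X i -> X i :=
  match i return X i -> X i with
  | 0 => fun _ => 0
  | i'.+1 => fun v => h i' (dX i' v)
  end.

Lemma hd_cycle {X : nat -> zmodType} {N : zmodType} {aX : forall i, Act (X i)} {dX}
    {gX : X 0%N -> N} {h} {i} {v : X i} :
  (forall i', (i' < i)%N -> hom (aX i') (aX i'.+1) (h i')) ->
  cycle_at dX gX v -> hd dX h v = 0.
Proof. by case: i v => [|i] v //= hom_h ->; rewrite (morphD_0 (homD (hom_h i _))). Qed.

Lemma hom_hd {X : nat -> zmodType} {aX : forall i, Act (X i)} {dX h} {i} : is_mod (aX i) ->
  (forall i', (i' < i)%N -> hom (aX i'.+1) (aX i') (dX i')) ->
  (forall i', (i' < i)%N -> hom (aX i') (aX i'.+1) (h i')) ->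
  hom (aX i) (aX i) (hd dX h (i := i)).
Proof.
case: i => [|i] /= modXi hom_dX hom_h; first exact: hom0.
exact: hom_comp (hom_dX i (ltnSn i)) (hom_h i (ltnSn i)).
Qed.

Section Homotopy.
Variables (X : nat -> zmodType) (N : zmodType) (aX : forall i, Act (X i)) (aN : Act N).
Variables (dX : forall i, X i.+1 -> X i) (gX : X 0%N -> N) (gam : forall i, X i -> X i).
Variable j : nat.
Hypotheses (freeX : forall i, (i < j)%N -> free (aX i))
  (modX : forall i, (i <= j)%N -> is_mod (aX i)).
Hypotheses (hom_gX : hom (aX 0%N) aN gX)
  (hom_dX : forall i, (i < j)%N -> hom (aX i.+1) (aX i) (dX i))
  (hom_gam : forall i, (i < j)%N -> hom (aX i) (aX i) (gam i)).
Hypotheses (cxX : complex_upto dX gX j) (exX : exact_upto dX gX j).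
Hypotheses (gam0 : forall u, gX (gam 0%N u) = gX u)
  (gam_chain : forall i, (i < j)%N -> forall u, dX i (gam i.+1 u) = gam i (dX i u)).

Definition homotopy_upto h k :=
  (forall i, (i < k)%N -> hom (aX i) (aX i.+1) (h i)) /\
  (forall i, (i < k)%N -> forall v, v - gam i v - hd dX h v = dX i (h i v)).

Lemma homotopy_defect_cycle h k : (k <= j)%N -> homotopy_upto h k ->
  forall u : X k, cycle_at dX gX (u - gam k u - hd dX h u).
Proof.
case: k => [|k] le_kj [hom_h hE] u /=.
  by rewrite subr0 (morphD_B (homD hom_gX)) gam0 subrr.
rewrite !(morphD_B (homD (hom_dX k le_kj))) -hE // gam_chain //.
by rewrite (hd_cycle (fun i lt_ik => hom_h i (ltnW lt_ik)) (cxX k le_kj u)) subr0 subrr.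
Qed.

Lemma homotopy_uptoS h k : (k < j)%N -> homotopy_upto h k ->
  exists h', homotopy_upto h' k.+1.
Proof.
move=> lt_kj hk; have [hom_h hE] := hk.
have modXk := modX k (ltnW lt_kj).
have hom_defect : hom (aX k) (aX k) (fun v => v - gam k v - hd dX h v).
  apply: hom_sub modXk (hom_sub modXk (hom_id _) (hom_gam k lt_kj)) (hom_hd modXk _ hom_h).
  by move=> i lt_ik; apply: hom_dX (ltn_trans lt_ik lt_kj).
have [a [hom_a aE]] := free_lift (freeX k lt_kj) (modX k.+1 lt_kj) modXk (hom_dX k lt_kj)
  hom_defect (fun u => exX k lt_kj _ (homotopy_defect_cycle (ltnW lt_kj) hk u)).
have hdE i (v : X i) : (i <= k)%N -> hd dX (upd h k a) v = hd dX h v.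
  by case: i v => [|i] v //= le_ik; rewrite upd_lt.
exists (upd h k a); split.
  exact: (@upd_extend _ (fun i => hom (aX i) (aX i.+1)) h k a hom_h hom_a).
move=> i; rewrite ltnS leq_eqVlt => /orP[/eqP->|lt_ik] v.
  by rewrite (hdE _ _ (leqnn k)) upd_eq aE.
by rewrite (hdE _ _ (ltnW lt_ik)) upd_lt ?hE.
Qed.

Lemma homotopy_exists : exists h, homotopy_upto h j.
Proof.
suff: forall k, (k <= j)%N -> exists h, homotopy_upto h k by apply.
elim=> [|k IHk] le_kj; first by exists (fun i (_ : X i) => 0 : X i.+1).
by have [h hk] := IHk (ltnW le_kj); apply: homotopy_uptoS hk.
Qed.

End Homotopy.
Arguments homotopy_upto {X} aX dX gam h k.

Definition FPn {N : zmodType} (aN : Act N) (n : nat) : Prop :=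
  exists (Q : nat -> zmodType) (aQ : forall i, Act (Q i))
         (dQ : forall i, Q i.+1 -> Q i) (gQ : Q 0%N -> N),
    [/\ forall i, (i <= n)%N -> free (aQ i), hom (aQ 0%N) aN gQ,
        forall i, (i < n)%N -> hom (aQ i.+1) (aQ i) (dQ i),
        (forall y, exists x, gQ x = y) & exact_upto dQ gQ n /\ complex_upto dQ gQ n].

Fixpoint tower (C : nat -> zmodType) (i : nat) : zmodType :=
  if i is i'.+1 then (tower C i' * C i'.+1)%type else C 0%N.

Fixpoint act_tower {C : nat -> zmodType} (aC : forall i, Act (C i)) (i : nat) :
    Act (tower C i) :=
  match i return Act (tower C i) with
  | 0 => aC 0%N
  | i'.+1 => act_prod (act_tower aC i') (aC i'.+1)
  end.

Section RetractResolution.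
Variables (n : nat) (N N' : zmodType) (aN : Act N) (aN' : Act N').
Variables (sig : N -> N') (p : N' -> N).
Variables (E C : nat -> zmodType) (aE : forall i, Act (E i)) (aC : forall i, Act (C i)).
Variables (dE : forall i, E i.+1 -> E i) (gE : E 0%N -> N').
Variables (dC : forall i, C i.+1 -> C i) (gC : C 0%N -> N) (pi : forall i, E i -> C i).
Hypotheses (modN : is_mod aN) (modN' : is_mod aN') (hom_sig : hom aN aN' sig)
  (sigK : cancel sig p).
Hypotheses (modE : forall i, (i <= n)%N -> is_mod (aE i))
  (freeC : forall i, (i <= n)%N -> free (aC i)).
Hypotheses (hom_dE : forall i, (i < n)%N -> hom (aE i.+1) (aE i) (dE i))
  (hom_gE : hom (aE 0%N) aN' gE)
  (hom_dC : forall i, (i < n)%N -> hom (aC i.+1) (aC i) (dC i))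
  (hom_gC : hom (aC 0%N) aN gC)
  (hom_pi : forall i, (i <= n)%N -> hom (aE i) (aC i) (pi i)).
Hypotheses (gE_onto : forall y, exists x, gE x = y) (exE : exact_upto dE gE n)
  (cxC : complex_upto dC gC n).
Hypotheses (gC_pi : forall x, gC (pi 0%N x) = p (gE x))
  (dC_pi : forall i, (i < n)%N -> forall x, dC i (pi i.+1 x) = pi i (dE i x)).

Let Q := tower C.
Let aQ := act_tower aC.

Lemma free_tower i : (i <= n)%N -> free (aQ i).
Proof.
elim: i => [|i IHi] le_in; first exact: freeC 0 le_in.
exact: free_prod (IHi (ltnW le_in)) (freeC i.+1 le_in).
Qed.

Lemma gC_onto y : exists x, gC x = y.
Proof. by have [x xE] := gE_onto (sig y); exists (pi 0%N x); rewrite gC_pi xE sigK. Qed.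

Definition resolution_upto (dQ : forall i, Q i.+1 -> Q i) k :=
  [/\ forall i, (i < k)%N -> hom (aQ i.+1) (aQ i) (dQ i),
      exact_upto dQ gC k & complex_upto dQ gC k].

Lemma resolution_upto_upd dQ k dk : resolution_upto dQ k ->
  hom (aQ k.+1) (aQ k) dk -> (forall w, cycle_at dQ gC (dk w)) ->
  (forall z, cycle_at dQ gC z -> exists w, dk w = z) ->
  resolution_upto (upd dQ k dk) k.+1.
Proof.
move=> [hom_dQ exQ cxQ] hom_dk dk_cycle dk_onto.
have cycleE i (v : Q i) : (i <= k)%N -> cycle_at (upd dQ k dk) gC v = cycle_at dQ gC v.
  by case: i v => [|i] v //= le_ik; rewrite upd_lt.
split; first exact: (@upd_extend _ (fun i => hom (aQ i.+1) (aQ i)) dQ k dk hom_dQ hom_dk).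
- move=> i; rewrite ltnS leq_eqVlt => /orP[/eqP->|lt_ik] v.
    by rewrite (cycleE _ _ (leqnn k)) upd_eq; apply: dk_onto.
  by rewrite (cycleE _ _ (ltnW lt_ik)) upd_lt //; apply: exQ.
- move=> i; rewrite ltnS leq_eqVlt => /orP[/eqP->|lt_ik] w.
    by rewrite cycleE // upd_eq.
  by rewrite (cycleE _ _ (ltnW lt_ik)) upd_lt //; apply: cxQ.
Qed.

Section ExtensionStep.
Local Unset Implicit Arguments.
Variables (dQ : forall i, Q i.+1 -> Q i) (k : nat).
Hypotheses (lt_kn : (k < n)%N) (resQ : resolution_upto dQ k).

Let le_kn := ltnW lt_kn.

Lemma comparison_to_E : exists al, chain_map_upto aQ aE dQ (sig \o gC) dE gE al k.
Proof.
have [hom_dQ _ cxQ] := resQ.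
apply: (@comparison _ _ _ _ _ aN') => //.
- by move=> i le_ik; apply: free_tower (leq_trans le_ik le_kn).
- by move=> i le_ik; apply: modE (leq_trans le_ik le_kn).
- by move=> i lt_ik; apply: hom_dE (leq_trans lt_ik le_kn).
- exact: hom_comp hom_gC hom_sig.
- exact: complex_upto_comp (morphD_0 (homD hom_sig)) cxQ.
- exact: exact_upto_le le_kn exE.
Qed.

Lemma comparison_from_C : exists be, chain_map_upto aC aQ dC gC dQ gC be k.
Proof.
have [hom_dQ exQ _] := resQ.
apply: (@comparison _ _ _ _ _ aN) => //.
- by move=> i le_ik; apply: freeC (leq_trans le_ik le_kn).
- by move=> i le_ik; apply/free_mod/free_tower/(leq_trans le_ik le_kn).
- by move=> i lt_ik; apply: hom_dC (leq_trans lt_ik le_kn).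
- exact: complex_upto_le le_kn cxC.
- by move=> u; exists u.
Qed.

Variables (al : forall i, Q i -> E i) (be : forall i, C i -> Q i).
Hypotheses (alP : chain_map_upto aQ aE dQ (sig \o gC) dE gE al k)
  (beP : chain_map_upto aC aQ dC gC dQ gC be k).

(* The composite [Q -> E -> C -> Q] lies over the identity of [N], hence is homotopic to
   the identity of [Q]. *)
Let gam i (u : Q i) := be i (pi i (al i u)).

Lemma hom_gam i : (i <= k)%N -> hom (aQ i) (aQ i) (gam i).
Proof.
have [hom_al _ _] := alP; have [hom_be _ _] := beP.
move=> le_ik; apply: hom_comp (hom_comp (hom_al i le_ik) _) (hom_be i le_ik).
exact: hom_pi (leq_trans le_ik le_kn).
Qed.

Lemma gam0 u : gC (gam 0%N u) = gC u.
Proof. by have [_ al0 _] := alP; have [_ be0 _] := beP; rewrite be0 gC_pi al0 sigK. Qed.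

Lemma gam_chain i : (i < k)%N -> forall u, dQ i (gam i.+1 u) = gam i (dQ i u).
Proof.
have [_ _ al_chain] := alP; have [_ _ be_chain] := beP.
by move=> lt_ik u; rewrite be_chain // dC_pi ?al_chain // (leq_trans lt_ik).
Qed.

Lemma gam_homotopy : exists h, homotopy_upto aQ dQ gam h k.
Proof.
have [hom_dQ exQ cxQ] := resQ.
apply: (@homotopy_exists _ _ _ aN) => //.
- by move=> i lt_ik; apply: free_tower (leq_trans (ltnW lt_ik) le_kn).
- by move=> i le_ik; apply/free_mod/free_tower/(leq_trans le_ik le_kn).
- exact: hom_gC.
- by move=> i lt_ik; apply: hom_gam (ltnW lt_ik).
- exact: cxQ.
- exact: exQ.
- exact: gam0.
- exact: gam_chain.
Qed.

Variable h : forall i, Q i -> Q i.+1.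
Hypothesis hk : homotopy_upto aQ dQ gam h k.

(* The cycles of degree [k] are the defects [u - gam u - h d u] of the homotopy plus the
   image of [d_C] under [be], so [Q k.+1 = Q k * C k.+1] maps onto them. *)
Let dk (w : Q k.+1) : Q k := w.1 - gam k w.1 - hd dQ h w.1 + be k (dC k w.2).

Lemma hom_dk : hom (aQ k.+1) (aQ k) dk.
Proof.
have [hom_dQ _ _] := resQ; have [hom_be _ _] := beP; have [hom_h _] := hk.
have modQk : is_mod (aQ k) := free_mod (free_tower k le_kn).
have hom_defect : hom (aQ k) (aQ k) (fun u => u - gam k u - hd dQ h u).
  apply: hom_sub modQk (hom_sub modQk (hom_id _) (hom_gam k (leqnn k))) (hom_hd modQk _ hom_h).
  by move=> i lt_ik; apply: hom_dQ.
have hom_bedC := hom_comp (hom_dC k lt_kn) (hom_be k (leqnn k)).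
exact: hom_add modQk (hom_comp (hom_fst _ _) hom_defect) (hom_comp (hom_snd _ _) hom_bedC).
Qed.

Lemma dk_cycle w : cycle_at dQ gC (dk w).
Proof.
have [hom_dQ _ cxQ] := resQ; have [hom_be be0 be_chain] := beP.
have hom_gQ : hom (aQ 0%N) aN gC := hom_gC.
apply: (cycle_atD hom_gQ hom_dQ).
  exact (homotopy_defect_cycle hom_gQ hom_dQ cxQ gam0 gam_chain (leqnn k) hk w.1).
apply: (chain_map_cycle hom_be _ be_chain k (leqnn k) _ (cxC k lt_kn w.2)).
by move=> v gv0; rewrite be0.
Qed.

Lemma dk_onto z : cycle_at dQ gC z -> exists w, dk w = z.
Proof.
have [hom_al al0 al_chain] := alP; have [hom_h _] := hk.
move=> cz; have: cycle_at dE gE (al k z).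
  apply: (chain_map_cycle hom_al _ al_chain k (leqnn k) z cz).
  by move=> v gv0; rewrite al0 /= gv0 (morphD_0 (homD hom_sig)).
case/(exE k lt_kn) => x xE; exists (z, pi k.+1 x).
by rewrite /dk /= (hd_cycle hom_h cz) subr0 dC_pi // xE subrK.
Qed.

Lemma resolution_upto_extend : resolution_upto (upd dQ k dk) k.+1.
Proof. exact: resolution_upto_upd resQ hom_dk dk_cycle dk_onto. Qed.

End ExtensionStep.

Lemma resolution_uptoS dQ k : (k < n)%N -> resolution_upto dQ k ->
  exists dQ', resolution_upto dQ' k.+1.
Proof.
move=> lt_kn resQ.
have [al alP] := comparison_to_E dQ k lt_kn resQ.
have [be beP] := comparison_from_C dQ k lt_kn resQ.
have [h hk] := gam_homotopy dQ k lt_kn resQ al be alP beP.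
by eexists; apply: (resolution_upto_extend dQ k lt_kn resQ al be alP beP h hk).
Qed.

Theorem FPn_of_retract : FPn aN n.
Proof.
suff [dQ [hom_dQ exQ cxQ]] : exists dQ, resolution_upto dQ n.
  by exists Q, aQ, dQ, gC; split=> //; [exact: free_tower | exact: gC_onto].
suff: forall k, (k <= n)%N -> exists dQ, resolution_upto dQ k by apply.
elim=> [|k IHk] le_kn; first by exists (fun i (_ : Q i.+1) => 0 : Q i).
by have [dQ resQ] := IHk (ltnW le_kn); apply: resolution_uptoS resQ.
Qed.

End RetractResolution.

End ModuleCategory.

(** * Left modules *)

Section LeftModules.
Variable R : pzRingType.

Definition is_lmod {M : zmodType} (a : R -> M -> M) : Prop :=
  [/\ forall r, {morph a r : x y / x + y}, forall r s x, a (r + s) x = a r x + a s x,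
      forall r s x, a (r * s) x = a r (a s x) & forall x, a 1 x = x].

Definition is_lfree {M : zmodType} (a : R -> M -> M) : Prop :=
  is_lmod a /\ exists r (phi : M -> 'rV[R]_r) (phi' : 'rV[R]_r -> M),
    [/\ left_linear a *:%R phi, left_linear *:%R a phi', cancel phi phi' & cancel phi' phi].

Definition lact_prod {M1 M2 : zmodType} (a1 : R -> M1 -> M1) (a2 : R -> M2 -> M2) :
    R -> M1 * M2 -> M1 * M2 :=
  fun r x => (a1 r x.1, a2 r x.2).

Lemma lmod_sum {M : zmodType} {a : R -> M -> M} : is_lmod a -> forall r I s (P : pred I) F,
  a r (\sum_(i <- s | P i) F i) = \sum_(i <- s | P i) a r (F i).
Proof. by case=> aD _ _ _ r; apply: morphD_sum. Qed.

Lemma llinD {M N : zmodType} {aM : R -> M -> M} {aN : R -> N -> N} {f : M -> N} :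
  left_linear aM aN f -> {morph f : x y / x + y}.
Proof. by case. Qed.

Lemma llin_id {M : zmodType} (aM : R -> M -> M) : left_linear aM aM id.
Proof. by []. Qed.

Lemma llin_comp {M N P : zmodType} {aM : R -> M -> M} {aN : R -> N -> N} {aP : R -> P -> P}
    {f : M -> N} {g : N -> P} :
  left_linear aM aN f -> left_linear aN aP g -> left_linear aM aP (g \o f).
Proof. by move=> [fD fZ] [gD gZ]; split=> * /=; rewrite ?fD ?gD ?fZ ?gZ. Qed.

Lemma llin_add {M N : zmodType} {aM : R -> M -> M} {aN : R -> N -> N} {f g : M -> N} :
  is_lmod aN -> left_linear aM aN f -> left_linear aM aN g ->
  left_linear aM aN (fun x => f x + g x).
Proof.
move=> [aND _ _ _] [fD fZ] [gD gZ]; split=> *; first by rewrite fD gD addrACA.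
by rewrite fZ gZ aND.
Qed.

Lemma llin_opp {M N : zmodType} {aM : R -> M -> M} {aN : R -> N -> N} {f : M -> N} :
  is_lmod aN -> left_linear aM aN f -> left_linear aM aN (fun x => - f x).
Proof.
move=> [aND _ _ _] [fD fZ]; split=> *; first by rewrite fD opprD.
by rewrite fZ (morphD_N (aND _)).
Qed.

Lemma llin0 {M N : zmodType} (aM : R -> M -> M) {aN : R -> N -> N} :
  is_lmod aN -> left_linear aM aN (fun _ => 0).
Proof. by move=> [aND _ _ _]; split=> *; rewrite ?addr0 ?(morphD_0 (aND _)). Qed.

Lemma lfree_mod {M : zmodType} {a : R -> M -> M} : is_lfree a -> is_lmod a.
Proof. by case. Qed.

Lemma lfree_lift {F X Y : zmodType} {aF : R -> F -> F} {aX : R -> X -> X}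
    {aY : R -> Y -> Y} {s : X -> Y} {f : F -> Y} :
  is_lfree aF -> is_lmod aX -> is_lmod aY -> left_linear aX aY s -> left_linear aF aY f ->
  (forall u, exists x, s x = f u) ->
  exists a, left_linear aF aX a /\ forall u, s (a u) = f u.
Proof.
move=> [_ [r [phi [phi' [[phiD phiZ] [phi'D phi'Z] phiK phi'K]]]]] modX _ [sD sZ] [fD fZ] s_onto.
have [xs xsE] := fin_all_exists (fun j : 'I_r => s_onto (phi' 'e_j)).
have [aXD aXDl aXM _] := modX.
exists (fun u => \sum_j aX (phi u 0 j) (xs j)); split; first split.
- by move=> x y; rewrite -big_split; apply: eq_bigr => j _; rewrite phiD mxE aXDl.
- by move=> c x; rewrite (lmod_sum modX); apply: eq_bigr => j _; rewrite phiZ mxE aXM.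
- move=> u; rewrite (morphD_sum sD); under eq_bigr => j _ do rewrite sZ xsE -fZ.
  rewrite -(morphD_sum fD) -{2}(phiK u) {2}(row_sum_delta (phi u)) (morphD_sum phi'D).
  by congr f; apply: eq_bigr => j _; rewrite phi'Z.
Qed.

Lemma lfree_prod {M1 M2 : zmodType} {a1 : R -> M1 -> M1} {a2 : R -> M2 -> M2} :
  is_lfree a1 -> is_lfree a2 -> is_lfree (lact_prod a1 a2).
Proof.
move=> [[a1D a1Dl a1M a11] [r1 [p1 [q1 [[p1D p1Z] [q1D q1Z] p1K q1K]]]]].
move=> [[a2D a2Dl a2M a21] [r2 [p2 [q2 [[p2D p2Z] [q2D q2Z] p2K q2K]]]]].
split.
  split=> [r x y|r s x|r s x|x]; rewrite /lact_prod /=;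
    by rewrite ?a1D ?a2D ?a1Dl ?a2Dl ?a1M ?a2M ?a11 ?a21 -?surjective_pairing.
exists (r1 + r2)%N, (fun x => row_mx (p1 x.1) (p2 x.2)),
  (fun v => (q1 (lsubmx v), q2 (rsubmx v))); split.
- split=> [x y|c x] /=; first by rewrite p1D p2D add_row_mx.
  by rewrite p1Z p2Z scale_row_mx.
- split=> [x y|c x] /=; first by rewrite !linearD /= q1D q2D.
  by rewrite !linearZ /= q1Z q2Z.
- by move=> [x y] /=; rewrite row_mxKl row_mxKr p1K p2K.
- by move=> v /=; rewrite q1K q2K hsubmxK.
Qed.

Lemma llin_fst {M1 M2 : zmodType} (a1 : R -> M1 -> M1) (a2 : R -> M2 -> M2) :
  left_linear (lact_prod a1 a2) a1 fst.
Proof. by []. Qed.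

Lemma llin_snd {M1 M2 : zmodType} (a1 : R -> M1 -> M1) (a2 : R -> M2 -> M2) :
  left_linear (lact_prod a1 a2) a2 snd.
Proof. by []. Qed.

Definition lmod_FPn {N : zmodType} (aN : R -> N -> N) (n : nat) :=
  FPn (fun M => R -> M -> M) (@left_linear R) (@is_lfree) aN n.

Lemma left_FPn_of_lmod_FPn {N : zmodType} (aN : R -> N -> N) n :
  lmod_FPn aN n -> left_FPn n aN.
Proof.
move=> [Q [aQ [dQ [gQ [freeQ hom_gQ hom_dQ gQ_onto [exQ cxQ]]]]]].
have iso i : {x : {r : nat & ((Q i -> 'rV[R]_r) * ('rV[R]_r -> Q i))%type} |
    (i <= n)%N -> [/\ left_linear (aQ i) *:%R (projT2 x).1,
      left_linear *:%R (aQ i) (projT2 x).2,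
      cancel (projT2 x).1 (projT2 x).2 & cancel (projT2 x).2 (projT2 x).1]}.
  apply: constructive_indefinite_description.
  case: (leqP i n) => [le_in|_]; last by exists (existT _ 0%N (fun _ => 0, fun _ => 0)).
  by have [_ [r [phi [phi' isoQ]]]] := freeQ i le_in; exists (existT _ r (phi, phi')).
pose m i := projT1 (sval (iso i)).
pose phi i : Q i -> 'rV[R]_(m i) := (projT2 (sval (iso i))).1.
pose phi' i : 'rV[R]_(m i) -> Q i := (projT2 (sval (iso i))).2.
have isoP i : (i <= n)%N -> [/\ left_linear (aQ i) *:%R (phi i),
    left_linear *:%R (aQ i) (phi' i), cancel (phi i) (phi' i) & cancel (phi' i) (phi i)].
  exact: (svalP (iso i)).
have lin_phi i : (i <= n)%N -> left_linear (aQ i) *:%R (phi i) by case/isoP.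
have lin_phi' i : (i <= n)%N -> left_linear *:%R (aQ i) (phi' i) by case/isoP.
have phiK i : (i <= n)%N -> cancel (phi i) (phi' i) by case/isoP.
have phi'K i : (i <= n)%N -> cancel (phi' i) (phi i) by case/isoP.
have [ex0 exS] := (exact_complex_uptoP _ _ n).1
  (exact_complex_upto_conj (fun i le_in => llinD (lin_phi i le_in)) phiK phi'K exQ cxQ).
exists m, (fun i v => phi i (dQ i (phi' i.+1 v))), (fun v => gQ (phi' 0%N v)); split=> //.
- exact: llin_comp (lin_phi' 0%N isT) hom_gQ.
- move=> i lt_in; apply: llin_comp (lin_phi i (ltnW lt_in)).
  exact: llin_comp (lin_phi' i.+1 lt_in) (hom_dQ i lt_in).
- by move=> y; have [x <-] := gQ_onto y; exists (phi 0%N x); rewrite phiK.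
Qed.

Definition lmod_FPn_of_retract := @FPn_of_retract (fun M => R -> M -> M) (@is_lmod)
  (@left_linear R) (@is_lfree) (@lact_prod) (@llinD) (@llin_id) (@llin_comp) (@llin_add)
  (@llin_opp) (@llin0) (@lfree_mod) (@lfree_lift) (@lfree_prod) (@llin_fst) (@llin_snd).

End LeftModules.
Arguments is_lmod {R M}.
Arguments is_lfree {R M}.
Arguments lmod_FPn_of_retract {R}.

Section LeftRetract.
Local Unset Implicit Arguments.
Variables (RA RD : pzRingType) (kap : RA -> RD) (the : RD -> RA).
Hypotheses (kapD : {morph kap : x y / x + y}) (kapM : {morph kap : x y / x * y})
  (theD : {morph the : x y / x + y}) (theM : {morph the : x y / x * y}) (the1 : the 1 = 1)
  (theK : cancel the kap).
Variables (N : zmodType) (actD : RD -> N -> N) (actA : RA -> N -> N).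
Hypotheses (modN : is_lmod actD) (actA_kap : forall a x, actA a x = actD (kap a) x).

Section BaseChange.
Variables (n : nat) (m : nat -> nat).
Variables (d : forall i, 'rV[RA]_(m i.+1) -> 'rV[RA]_(m i)) (g : 'rV[RA]_(m 0%N) -> N).
Hypotheses (lin_g : left_linear *:%R actA g)
  (lin_d : forall i, (i < n)%N -> left_linear *:%R *:%R (d i)).

(* Base change along [kap]: the differentials of the new complex are determined by the
   images of the standard basis vectors. *)
Let pi {i} (v : 'rV[RA]_(m i)) : 'rV[RD]_(m i) := map_mx kap v.
Let dC i (w : 'rV[RD]_(m i.+1)) : 'rV[RD]_(m i) := \sum_j w 0 j *: pi (d i 'e_j).
Let gC (w : 'rV[RD]_(m 0%N)) : N := \sum_j actD (w 0 j) (g 'e_j).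

Lemma map_mx_kapD i : {morph @pi i : x y / x + y}.
Proof. by move=> x y; apply/rowP => j; rewrite !mxE kapD. Qed.

Lemma map_mx_kapZ i a (x : 'rV[RA]_(m i)) : pi (a *: x) = kap a *: pi x.
Proof. by apply/rowP => j; rewrite !mxE kapM. Qed.

Lemma map_mx_kap_the i (w : 'rV[RD]_(m i)) : pi (map_mx the w) = w.
Proof. by apply/rowP => j; rewrite !mxE theK. Qed.

Lemma gC_map_mx x : gC (pi x) = g x.
Proof.
rewrite {2}(row_sum_delta x) (morphD_sum (llinD lin_g)) /gC.
by apply: eq_bigr => j _; rewrite lin_g.2 actA_kap mxE.
Qed.

Lemma dC_map_mx i : (i < n)%N -> forall x, dC i (pi x) = pi (d i x).
Proof.
move=> lt_in x; rewrite {2}(row_sum_delta x) (morphD_sum (llinD (lin_d i lt_in))).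
rewrite (morphD_sum (map_mx_kapD i)); apply: eq_bigr => j _.
by rewrite (lin_d i lt_in).2 map_mx_kapZ mxE.
Qed.

Hypotheses (g_onto : forall y, exists x, g x = y) (exE : exact_upto d g n)
  (cxE : complex_upto d g n).

Lemma left_FPn_base_change : left_FPn n actD.
Proof.
apply: left_FPn_of_lmod_FPn.
apply: (lmod_FPn_of_retract n N N actD actD id id (fun i => 'rV[RA]_(m i)) (fun i => 'rV[RD]_(m i))
  (fun i r v => the r *: v) (fun i r v => r *: v) d g dC gC (@pi)) => //.
- move=> i _; split=> [r x y|r s x|r s x|x];
    by rewrite ?scalerDr ?theD ?scalerDl ?theM ?scalerA ?the1 ?scale1r.
- move=> i _; split; last by exists (m i), id, id.
  by split=> [r x y|r s x|r s x|x]; rewrite ?scalerDr ?scalerDl ?scalerA ?scale1r.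
- by move=> i lt_in; have [dD dZ] := lin_d i lt_in; split=> // r x; rewrite dZ.
- by split=> [|r x]; [exact: lin_g.1 | rewrite lin_g.2 actA_kap theK].
- move=> i lt_in; split=> [x y|r x].
    by rewrite /dC -big_split; apply: eq_bigr => j _; rewrite mxE scalerDl.
  by rewrite /dC scaler_sumr; apply: eq_bigr => j _; rewrite mxE scalerA.
- have [aD aDl aM _] := modN; split=> [x y|r x].
    by rewrite /gC -big_split; apply: eq_bigr => j _; rewrite mxE aDl.
  by rewrite /gC (lmod_sum modN); apply: eq_bigr => j _; rewrite mxE aM.
- by move=> i _; split=> [|a x]; [exact: map_mx_kapD | rewrite map_mx_kapZ theK].
- apply: (complex_upto_image (q := id) _ _ _ gC_map_mx dC_map_mx cxE) => // i _.
    exact: morphD_0 (map_mx_kapD i).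
  by move=> w; exists (map_mx the w); apply: map_mx_kap_the.
- exact: gC_map_mx.
- exact: dC_map_mx.
Qed.

End BaseChange.

Lemma left_FPn_retract n : left_FPn n actA -> left_FPn n actD.
Proof.
move=> [m [d [g [lin_g lin_d g_onto ex0 exS]]]].
have [exE cxE] := (exact_complex_uptoP d g n).2 (conj ex0 exS).
exact: left_FPn_base_change lin_g lin_d g_onto exE cxE.
Qed.

End LeftRetract.

(** * Bimodules *)

Definition bimodule_basis {K : comNzRingType} {A : algType K} {F : zmodType}
    (lF : A -> F -> F) (rF : F -> A -> F) {rk : nat} (e : 'I_rk -> F) : Prop :=
  forall (N : zmodType) (lN : A -> N -> N) (rN : N -> A -> N), is_bimodule lN rN ->
  forall nv : 'I_rk -> N, exists f : F -> N,
    [/\ bimod_hom lF rF lN rN f, (forall i, f (e i) = nv i) &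
        (forall f' : F -> N, bimod_hom lF rF lN rN f' ->
           (forall i, f' (e i) = nv i) -> forall x, f' x = f x)].

Section Bimodules.
Variables (K : comNzRingType) (D : algType K).

Definition bact (M : zmodType) := ((D -> M -> M) * (M -> D -> M))%type.

Definition bhom {M N : zmodType} (aM : bact M) (aN : bact N) (f : M -> N) :=
  bimod_hom aM.1 aM.2 aN.1 aN.2 f.

Definition is_bmod {M : zmodType} (a : bact M) := is_bimodule a.1 a.2.

Definition is_bfree {M : zmodType} (a : bact M) := exists rk, free_bimodule a.1 a.2 rk.

Definition bact_prod {M1 M2 : zmodType} (a1 : bact M1) (a2 : bact M2) : bact (M1 * M2)%type :=
  (fun d x => (a1.1 d x.1, a2.1 d x.2), fun x d => (a1.2 x.1 d, a2.2 x.2 d)).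

Lemma bhomD {M N : zmodType} {aM : bact M} {aN : bact N} {f : M -> N} :
  bhom aM aN f -> {morph f : x y / x + y}.
Proof. by case. Qed.

Lemma bhom_id {M : zmodType} (aM : bact M) : bhom aM aM id.
Proof. by []. Qed.

Lemma bhom_comp {M N P : zmodType} {aM : bact M} {aN : bact N} {aP : bact P}
    {f : M -> N} {g : N -> P} :
  bhom aM aN f -> bhom aN aP g -> bhom aM aP (g \o f).
Proof. by move=> [fD fl fr] [gD gl gr]; split=> * /=; rewrite ?fD ?gD ?fl ?gl ?fr ?gr. Qed.

Lemma bhom_add {M N : zmodType} {aM : bact M} {aN : bact N} {f g : M -> N} :
  is_bmod aN -> bhom aM aN f -> bhom aM aN g -> bhom aM aN (fun x => f x + g x).
Proof.
move=> [[lD _] [[rD _] _]] [fD fl fr] [gD gl gr]; split=> *.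
- by rewrite fD gD addrACA.
- by rewrite fl gl lD.
- by rewrite fr gr rD.
Qed.

Lemma bhom_opp {M N : zmodType} {aM : bact M} {aN : bact N} {f : M -> N} :
  is_bmod aN -> bhom aM aN f -> bhom aM aN (fun x => - f x).
Proof.
move=> [[lD _] [[rD _] _]] [fD fl fr]; split=> *.
- by rewrite fD opprD.
- by rewrite fl (morphD_N (lD _)).
- by rewrite fr (morphD_N (fun x y => rD _ x y)).
Qed.

Lemma bhom0 {M N : zmodType} (aM : bact M) {aN : bact N} :
  is_bmod aN -> bhom aM aN (fun _ => 0).
Proof.
move=> [[lD _] [[rD _] _]]; split=> *; first by rewrite addr0.
  by rewrite (morphD_0 (lD _)).
by rewrite (morphD_0 (fun x y => rD _ x y)).
Qed.

Lemma bfree_mod {M : zmodType} {a : bact M} : is_bfree a -> is_bmod a.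
Proof. by case=> rk []. Qed.

Lemma bhom_basis_eq {F : zmodType} {aF : bact F} {rk} {e : 'I_rk -> F} :
  bimodule_basis aF.1 aF.2 e -> forall {N : zmodType} {aN : bact N} {f g : F -> N}, is_bmod aN ->
  bhom aF aN f -> bhom aF aN g -> (forall i, f (e i) = g (e i)) -> forall x, f x = g x.
Proof.
move=> univ N aN f g modN hom_f hom_g efg x.
have [h [_ _ h_uniq]] := univ N aN.1 aN.2 modN (fun i => g (e i)).
by rewrite (h_uniq f hom_f efg) (h_uniq g hom_g (fun i => erefl)).
Qed.

Lemma bfree_lift {F X Y : zmodType} {aF : bact F} {aX : bact X} {aY : bact Y}
    {s : X -> Y} {f : F -> Y} :
  is_bfree aF -> is_bmod aX -> is_bmod aY -> bhom aX aY s -> bhom aF aY f ->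
  (forall u, exists x, s x = f u) ->
  exists a, bhom aF aX a /\ forall u, s (a u) = f u.
Proof.
move=> [rk [modF [e univ]]] modX modY hom_s hom_f s_onto.
have [xs xsE] := fin_all_exists (fun j : 'I_rk => s_onto (e j)).
have [a [hom_a aE _]] := univ X aX.1 aX.2 modX xs.
exists a; split=> // u.
have := bhom_basis_eq univ modY (bhom_comp hom_a hom_s) hom_f; apply=> i /=.
by rewrite aE xsE.
Qed.

Lemma bmod_prod {M1 M2 : zmodType} {a1 : bact M1} {a2 : bact M2} :
  is_bmod a1 -> is_bmod a2 -> is_bmod (bact_prod a1 a2).
Proof.
move=> [[l1 [l2 [l3 l4]]] [[r1 [r2 [r3 r4]]] [c1 c2]]].
move=> [[m1 [m2 [m3 m4]]] [[s1 [s2 [s3 s4]]] [d1 d2]]].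
rewrite /is_bmod /bact_prod /=.
do !split=> *; by rewrite /= ?l1 ?l2 ?l3 ?l4 ?r1 ?r2 ?r3 ?r4 ?c1 ?c2
  ?m1 ?m2 ?m3 ?m4 ?s1 ?s2 ?s3 ?s4 ?d1 ?d2 -?surjective_pairing.
Qed.

Lemma bfree_prod {M1 M2 : zmodType} {a1 : bact M1} {a2 : bact M2} :
  is_bfree a1 -> is_bfree a2 -> is_bfree (bact_prod a1 a2).
Proof.
move=> [rk1 [mod1 [e1 univ1]]] [rk2 [mod2 [e2 univ2]]].
exists (rk1 + rk2)%N; split; first exact: bmod_prod.
pose e i := match split i with inl j => (e1 j, 0) | inr j => (0, e2 j) end.
have e_lshift j : e (lshift rk2 j) = (e1 j, 0) by rewrite /e (unsplitK (inl _ j)).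
have e_rshift j : e (rshift rk1 j) = (0, e2 j) by rewrite /e (unsplitK (inr _ j)).
exists e => N lN rN modN nv; have [[lND _] [[rND _] _]] := modN.
have [f1 [[f1D f1l f1r] f1e f1_uniq]] := univ1 N lN rN modN (fun j => nv (lshift rk2 j)).
have [f2 [[f2D f2l f2r] f2e f2_uniq]] := univ2 N lN rN modN (fun j => nv (rshift rk1 j)).
have [[l1D _] [[r1D _] _]] := mod1; have [[l2D _] [[r2D _] _]] := mod2.
exists (fun x => f1 x.1 + f2 x.2); split.
- split=> * /=; first by rewrite f1D f2D addrACA.
    by rewrite f1l f2l lND.
  by rewrite f1r f2r rND.
- move=> i; rewrite -(splitK i); case: (split i) => j /=; rewrite ?e_lshift ?e_rshift /=.
    by rewrite f1e (morphD_0 f2D) addr0.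
  by rewrite f2e (morphD_0 f1D) add0r.
- move=> f' [f'D f'l f'r] f'e [x1 x2] /=.
  have -> : f' (x1, x2) = f' (x1, 0) + f' (0, x2).
    by rewrite -f'D; congr f'; congr pair; rewrite ?addr0 ?add0r.
  congr (_ + _).
  + apply: (f1_uniq (fun y => f' (y, 0))); last by move=> j; rewrite -e_lshift f'e.
    split=> [x y|a x|x a] /=.
    * by rewrite -f'D; congr f'; congr pair; rewrite addr0.
    * by rewrite -f'l /= (morphD_0 (l2D _)).
    * by rewrite -f'r /= (morphD_0 (fun x y => r2D _ x y)).
  + apply: (f2_uniq (fun y => f' (0, y))); last by move=> j; rewrite -e_rshift f'e.
    split=> [x y|a x|x a] /=.
    * by rewrite -f'D; congr f'; congr pair; rewrite addr0.
    * by rewrite -f'l /= (morphD_0 (l1D _)).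
    * by rewrite -f'r /= (morphD_0 (fun x y => r1D _ x y)).
Qed.

Lemma bhom_fst {M1 M2 : zmodType} (a1 : bact M1) (a2 : bact M2) :
  bhom (bact_prod a1 a2) a1 fst.
Proof. by []. Qed.

Lemma bhom_snd {M1 M2 : zmodType} (a1 : bact M1) (a2 : bact M2) :
  bhom (bact_prod a1 a2) a2 snd.
Proof. by []. Qed.

Definition bmod_FPn {N : zmodType} (aN : bact N) (n : nat) :=
  FPn bact (@bhom) (@is_bfree) aN n.

Lemma bimod_FPn_of_bmod_FPn {N : zmodType} (aN : bact N) n :
  bmod_FPn aN n -> bimod_FPn n aN.1 aN.2.
Proof.
move=> [Q [aQ [dQ [gQ [freeQ hom_gQ hom_dQ gQ_onto /exact_complex_uptoP [ex0 exS]]]]]].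
by exists Q, (fun i => (aQ i).1), (fun i => (aQ i).2), dQ, gQ; split.
Qed.

Definition bmod_FPn_of_retract := @FPn_of_retract bact (@is_bmod) (@bhom) (@is_bfree)
  (@bact_prod) (@bhomD) (@bhom_id) (@bhom_comp) (@bhom_add) (@bhom_opp) (@bhom0)
  (@bfree_mod) (@bfree_lift) (@bfree_prod) (@bhom_fst) (@bhom_snd).

End Bimodules.

Lemma bimodule_twist {K : comNzRingType} {R1 R2 : algType K} (phi : {lrmorphism R1 -> R2})
    {M : zmodType} {l : R2 -> M -> M} {r : M -> R2 -> M} :
  is_bimodule l r -> is_bimodule (fun a x => l (phi a) x) (fun x a => r x (phi a)).
Proof.
move=> [[l1 [l2 [l3 l4]]] [[r1 [r2 [r3 r4]]] [c1 c2]]].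
by do !split=> *; rewrite ?rmorphD ?rmorphM ?rmorph1 ?rmorph_alg ?l1 ?l2 ?l3 ?l4
  ?r1 ?r2 ?r3 ?r4 ?c1 ?c2.
Qed.

Lemma bimodule_inj {K : comNzRingType} {A : algType K} {M N : zmodType}
    {l : A -> M -> M} {r : M -> A -> M} {l' : A -> N -> N} {r' : N -> A -> N} {f : M -> N} :
  injective f -> {morph f : x y / x + y} ->
  (forall a x, f (l a x) = l' a (f x)) -> (forall a x, f (r x a) = r' (f x) a) ->
  is_bimodule l' r' -> is_bimodule l r.
Proof.
move=> f_inj fD fl fr [[l1 [l2 [l3 l4]]] [[r1 [r2 [r3 r4]]] [c1 c2]]].
by do !split=> *; apply: f_inj; rewrite ?fl ?fr ?fD ?fl ?fr ?l1 ?l2 ?l3 ?l4 ?r1 ?r2 ?r3 ?r4 ?c2.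
Qed.

Section FixedPoints.
Variables (F : zmodType) (T : {additive F -> F}).

Definition fixed_points := [pred x | T x == x].

Lemma fixed_points_zmod_closed : zmod_closed fixed_points.
Proof. by split=> [|x y]; rewrite !inE ?raddf0 // raddfB => /eqP-> /eqP->. Qed.

HB.instance Definition _ :=
  GRing.isZmodClosed.Build F fixed_points fixed_points_zmod_closed.
Record fixed := Fixed { fixval : F; fixvalP : fixval \in fixed_points }.
HB.instance Definition _ := [isSub for fixval].
HB.instance Definition _ := [Choice of fixed by <:].
HB.instance Definition _ := [SubChoice_isSubZmodule of fixed by <:].

Lemma fixval_inj : injective fixval.
Proof. exact: val_inj. Qed.

Lemma fixvalD : {morph fixval : x y / x + y}.
Proof. by []. Qed.

Lemma fixvalK (y : fixed) : T (fixval y) = fixval y.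
Proof. exact/eqP/fixvalP. Qed.

Hypothesis T_idem : forall x, T (T x) = T x.

Lemma fix_proj_subproof x : T x \in fixed_points.
Proof. by rewrite inE T_idem. Qed.

Definition fix_proj (x : F) : fixed := Fixed (T x) (fix_proj_subproof x).

Lemma fix_projK : cancel fixval fix_proj.
Proof. by move=> y; apply: val_inj; rewrite /= fixvalK. Qed.

Lemma fix_projD : {morph fix_proj : x y / x + y}.
Proof. by move=> x y; apply: val_inj; rewrite /= raddfD. Qed.

Definition fix_lact {R : Type} (l : R -> F -> F) (a : R) (y : fixed) : fixed :=
  fix_proj (l a (fixval y)).

Definition fix_ract {R : Type} (r : F -> R -> F) (y : fixed) (a : R) : fixed :=
  fix_proj (r (fixval y) a).

End FixedPoints.
Arguments fixval {F T}.
Arguments fixvalD {F T}.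
Arguments fixval_inj {F T}.
Arguments fixvalK {F T}.
Arguments fix_proj {F T} T_idem x.
Arguments fix_projK {F T} T_idem.
Arguments fix_projD {F T} T_idem.
Arguments fix_lact {F T} T_idem {R} l a y.
Arguments fix_ract {F T} T_idem {R} r y a.

Section FreeBimoduleBaseChange.
Variables (K : comNzRingType) (A D : algType K).
Variables (kappa : {lrmorphism A -> D}) (theta : {lrmorphism D -> A}).
Hypothesis kappaK : cancel theta kappa.
Local Notation tau := (theta \o kappa).

Lemma tau_idem a : tau (tau a) = tau a.
Proof. by rewrite /= kappaK. Qed.

Variables (F : zmodType) (lF : A -> F -> F) (rF : F -> A -> F) (rk : nat) (e : 'I_rk -> F).
Hypotheses (modF : is_bimodule lF rF) (basis_e : bimodule_basis lF rF e).

(* [D (x)_A F (x)_A D] is realised as the fixed points of the [tau]-semilinear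
   endomorphism [T] of [F] fixing the basis: every [tau]-semilinear map out of [F]
   factors through [T] ([twisted_hom_T]). *)
Lemma base_change_idempotent_exists : exists T : {additive F -> F},
  [/\ forall a x, T (lF a x) = lF (tau a) (T x), forall a x, T (rF x a) = rF (T x) (tau a)
    & forall i, T (e i) = e i].
Proof.
have [T0 [[T0D T0l T0r] T0e _]] := basis_e (bimodule_twist tau modF) e.
pose T : {additive F -> F} := HB.pack T0 (GRing.isZmodMorphism.Build _ _ T0 (morphD_B T0D)).
by exists T.
Qed.

Variable T : {additive F -> F}.
Hypotheses (T_l : forall a x, T (lF a x) = lF (tau a) (T x))
  (T_r : forall a x, T (rF x a) = rF (T x) (tau a)) (T_e : forall i, T (e i) = e i).

Lemma twisted_hom_T {M : zmodType} {lM : A -> M -> M} {rM : M -> A -> M} {f : F -> M} :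
  is_bimodule lM rM ->
  bimod_hom lF rF (fun a y => lM (tau a) y) (fun y a => rM y (tau a)) f ->
  forall x, f (T x) = f x.
Proof.
move=> modM hom_f; apply: (bhom_basis_eq (aF := (lF, rF)) (f := f \o T)
  (aN := (fun a y => lM (tau a) y, fun y a => rM y (tau a))) basis_e
  (bimodule_twist tau modM)) => //.
- have [fD fl fr] := hom_f; split=> [x y|a x|x a] /=; rewrite ?raddfD ?fD //.
    by rewrite T_l fl tau_idem.
  by rewrite T_r fr tau_idem.
- by move=> i /=; rewrite T_e.
Qed.

Lemma T_idempotent x : T (T x) = T x.
Proof. by apply: (twisted_hom_T (f := T) modF); split; [apply: raddfD|..]. Qed.

Section FixedBimodule.
Hypothesis T_idem : forall x, T (T x) = T x.
Let lfix := fix_lact T_idem (fun d => lF (theta d)).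
Let rfix := fix_ract T_idem (fun y d => rF y (theta d)).

Lemma lfixE d y : fixval (lfix d y) = lF (theta d) (fixval y).
Proof. by rewrite /= T_l /= kappaK fixvalK. Qed.

Lemma rfixE y d : fixval (rfix y d) = rF (fixval y) (theta d).
Proof. by rewrite /= T_r /= kappaK fixvalK. Qed.

Lemma fix_proj_l a x : fix_proj T_idem (lF a x) = lfix (kappa a) (fix_proj T_idem x).
Proof. by apply: val_inj => /=; rewrite !T_l /= kappaK T_idem. Qed.

Lemma fix_proj_r x a : fix_proj T_idem (rF x a) = rfix (fix_proj T_idem x) (kappa a).
Proof. by apply: val_inj => /=; rewrite !T_r /= kappaK T_idem. Qed.

Lemma bimod_hom_fixval :
  bimod_hom lfix rfix (fun d => lF (theta d)) (fun y d => rF y (theta d)) fixval.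
Proof. by split=> [//|d y|y d]; [apply: lfixE | apply: rfixE]. Qed.

Lemma bimod_hom_fix_proj :
  bimod_hom (fun d => lF (theta d)) (fun y d => rF y (theta d)) lfix rfix (fix_proj T_idem).
Proof.
split=> [|d x|x d]; first exact: fix_projD.
  by rewrite fix_proj_l kappaK.
by rewrite fix_proj_r kappaK.
Qed.

Lemma fixed_bimodule : is_bimodule lfix rfix.
Proof.
apply: (bimodule_inj fixval_inj fixvalD _ _ (bimodule_twist theta modF)).
  exact: lfixE.
by move=> d y; apply: rfixE.
Qed.

Lemma fixed_basis : bimodule_basis lfix rfix (fun i => fix_proj T_idem (e i)).
Proof.
move=> N lN rN modN nv.
have [f [[fD fl fr] fe f_uniq]] := basis_e (bimodule_twist kappa modN) nv.
exists (fun y => f (fixval y)); split.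
- split=> [x y|d y|y d]; first exact: fD.
    by rewrite lfixE fl kappaK.
  by rewrite rfixE fr kappaK.
- by move=> i /=; rewrite T_e fe.
move=> f' [f'D f'l f'r] f'e y; rewrite -{1}[y](fix_projK T_idem).
apply: (f_uniq (fun x => f' (fix_proj T_idem x))); last by move=> i; rewrite f'e.
split=> [x z|a x|x a] /=; first by rewrite fix_projD f'D.
  by rewrite fix_proj_l f'l.
by rewrite fix_proj_r f'r.
Qed.

Lemma fixed_free : free_bimodule lfix rfix rk.
Proof.
by split; [exact: fixed_bimodule | exists (fun i => fix_proj T_idem (e i)); apply: fixed_basis].
Qed.

End FixedBimodule.

End FreeBimoduleBaseChange.

Section BimoduleRetract.
Local Unset Implicit Arguments.
Variables (K : comNzRingType) (A D : algType K).
Variables (kappa : {lrmorphism A -> D}) (theta : {lrmorphism D -> A}).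
Hypothesis kappaK : cancel theta kappa.
Local Notation tau := (theta \o kappa).
Variables (NA : zmodType) (lA : A -> NA -> NA) (rA : NA -> A -> NA).
Variables (N : zmodType) (lN : D -> N -> N) (rN : N -> D -> N).
Variables (p : NA -> N) (sig : N -> NA).
Hypotheses (modA : is_bimodule lA rA) (modN : is_bimodule lN rN).
Hypotheses (hom_p : bimod_hom lA rA (fun a y => lN (kappa a) y) (fun y a => rN y (kappa a)) p)
  (hom_sig : bimod_hom lN rN (fun d x => lA (theta d) x) (fun x d => rA x (theta d)) sig)
  (sigK : cancel sig p).

Section BaseChange.
Variables (n : nat) (F : nat -> zmodType).
Variables (lF : forall i, A -> F i -> F i) (rF : forall i, F i -> A -> F i).
Variables (d : forall i, F i.+1 -> F i) (g : F 0%N -> NA) (T : forall i, {additive F i -> F i}).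
Hypotheses (basis_F : forall i, (i <= n)%N -> is_bimodule (lF i) (rF i) /\
  exists rk (e : 'I_rk -> F i), bimodule_basis (lF i) (rF i) e /\ forall j, T i (e j) = e j).
Hypotheses (T_l : forall i, (i <= n)%N -> forall a x, T i (lF i a x) = lF i (tau a) (T i x))
  (T_r : forall i, (i <= n)%N -> forall a x, T i (rF i x a) = rF i (T i x) (tau a))
  (T_idem : forall i x, T i (T i x) = T i x).
Hypotheses (hom_g : bimod_hom (lF 0%N) (rF 0%N) lA rA g)
  (hom_d : forall i, (i < n)%N -> bimod_hom (lF i.+1) (rF i.+1) (lF i) (rF i) (d i))
  (g_onto : forall y, exists x, g x = y) (exE : exact_upto d g n) (cxE : complex_upto d g n).

Let pi i (x : F i) : fixed (T i) := fix_proj (T_idem i) x.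
Let dC i (y : fixed (T i.+1)) : fixed (T i) := pi i (d i (fixval y)).
Let gC (y : fixed (T 0%N)) : N := p (g (fixval y)).

Lemma gC_fix_proj x : gC (pi 0%N x) = p (g x).
Proof.
have [_ [rk [e [basis_e T_e]]]] := basis_F 0%N isT.
have hom_pg : bimod_hom (lF 0%N) (rF 0%N) (fun a y => lN (kappa (tau a)) y)
    (fun y a => rN y (kappa (tau a))) (p \o g).
  have [pD pl pr] := hom_p; have [gD gl gr] := hom_g.
  by split=> [x1 x2|a y|y a] /=; rewrite ?gD ?pD ?gl ?gr ?pl ?pr //= kappaK.
exact: (twisted_hom_T kappa theta kappaK basis_e (T 0%N) (T_l 0%N isT) (T_r 0%N isT) T_e
  (bimodule_twist kappa modN) hom_pg x).
Qed.

Lemma dC_fix_proj i : (i < n)%N -> forall x, dC i (pi i.+1 x) = pi i (d i x).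
Proof.
move=> lt_in x; have le_in := ltnW lt_in; apply: val_inj => /=.
have [modFi _] := basis_F i le_in.
have [_ [rk [e [basis_e T_e]]]] := basis_F i.+1 lt_in.
have hom_Td : bimod_hom (lF i.+1) (rF i.+1) (fun a y => lF i (tau a) y)
    (fun y a => rF i y (tau a)) (T i \o d i).
  have [dD dl dr] := hom_d i lt_in.
  by split=> [x1 x2|a y|y a] /=; rewrite ?dD ?raddfD ?dl ?dr ?T_l ?T_r.
exact: (twisted_hom_T kappa theta kappaK basis_e (T i.+1) (T_l i.+1 lt_in) (T_r i.+1 lt_in)
  T_e modFi hom_Td x).
Qed.

Let aE i : bact D (F i) := (fun d => lF i (theta d), fun y d => rF i y (theta d)).
Let aC i : bact D (fixed (T i)) :=
  (fix_lact (T_idem i) (fun d => lF i (theta d)),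
   fix_ract (T_idem i) (fun y d => rF i y (theta d))).

Lemma bhom_fix_proj i : (i <= n)%N -> bhom (aE i) (aC i) (pi i).
Proof. by move=> le_in; apply: bimod_hom_fix_proj (T_l i le_in) (T_r i le_in) (T_idem i). Qed.

Lemma bhom_fixval i : (i <= n)%N -> bhom (aC i) (aE i) fixval.
Proof. by move=> le_in; apply: bimod_hom_fixval (T_l i le_in) (T_r i le_in) (T_idem i). Qed.

Lemma bfree_fixed i : (i <= n)%N -> is_bfree (aC i).
Proof.
move=> le_in; have [modFi [rk [e [basis_e T_e]]]] := basis_F i le_in; exists rk.
exact: fixed_free modFi basis_e (T i) (T_l i le_in) (T_r i le_in) T_e (T_idem i).
Qed.

Let aNA : bact D NA := (fun d => lA (theta d), fun x d => rA x (theta d)).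

Lemma bhom_d i : (i < n)%N -> bhom (aE i.+1) (aE i) (d i).
Proof.
move=> lt_in; have [dD dl dr] := hom_d i lt_in.
by split=> [|a x|x a] /=; rewrite ?dl ?dr.
Qed.

Lemma bhom_g : bhom (aE 0%N) aNA g.
Proof. by have [gD gl gr] := hom_g; split=> [|a x|x a] /=; rewrite ?gl ?gr. Qed.

Lemma bhom_p : bhom aNA (lN, rN) p.
Proof.
have [pD pl pr] := hom_p.
by split=> [|a y|y a] /=; [exact: pD | rewrite pl kappaK | rewrite pr kappaK].
Qed.

Lemma bimod_FPn_base_change : bimod_FPn n lN rN.
Proof.
apply: (bimod_FPn_of_bmod_FPn (aN := (lN, rN))).
apply: (@bmod_FPn_of_retract K D n N NA (lN, rN) aNA sig p F (fun i => fixed (T i))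
  aE aC d g dC gC pi) => //.
- exact (bimodule_twist theta modA).
- move=> i le_in; exact (bimodule_twist theta (basis_F i le_in).1).
- exact: bfree_fixed.
- exact: bhom_d.
- exact: bhom_g.
- move=> i lt_in; have hom_dfix := bhom_comp (bhom_fixval i.+1 lt_in) (bhom_d i lt_in).
  exact: bhom_comp hom_dfix (bhom_fix_proj i (ltnW lt_in)).
- exact: bhom_comp (bhom_comp (bhom_fixval 0%N isT) bhom_g) bhom_p.
- exact: bhom_fix_proj.
- apply: (complex_upto_image _ _ _ gC_fix_proj dC_fix_proj cxE).
  + by have [pD _ _] := hom_p; apply: morphD_0 pD.
  + by move=> i _; apply: val_inj; rewrite /= raddf0.
  + by move=> i _ y; exists (fixval y); apply: fix_projK.
- exact: gC_fix_proj.
- exact: dC_fix_proj.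
Qed.

End BaseChange.

Lemma bimod_FPn_retract n : bimod_FPn n lA rA -> bimod_FPn n lN rN.
Proof.
move=> [F [lF [rF [d [g [free_F [hom_g hom_d g_onto ex0 exS]]]]]]].
have [exE cxE] := (exact_complex_uptoP d g n).2 (conj ex0 exS).
have base_change i : {T : {additive F i -> F i} | (forall x, T (T x) = T x) /\ ((i <= n)%N ->
    [/\ is_bimodule (lF i) (rF i) /\
          (exists rk (e : 'I_rk -> F i),
             bimodule_basis (lF i) (rF i) e /\ forall j, T (e j) = e j),
        forall a x, T (lF i a x) = lF i (tau a) (T x) &
        forall a x, T (rF i x a) = rF i (T x) (tau a)])}.
  apply: constructive_indefinite_description.
  case: (leqP i n) => [le_in|_]; last by exists idfun.
  have [rk [modF [e basis_e]]] := free_F i le_in.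
  have [T [T_l T_r T_e]] := base_change_idempotent_exists kappa theta modF basis_e.
  exists T; split; first exact (T_idempotent kappa theta kappaK modF basis_e T T_l T_r T_e).
  by split=> //; split=> //; exists rk, e.
pose T i := sval (base_change i).
have T_idem i : forall x, T i (T i x) = T i x by exact: (svalP (base_change i)).1.
have T_P i : (i <= n)%N -> _ := (svalP (base_change i)).2.
apply: (bimod_FPn_base_change n F lF rF d g T) => // i le_in; by case: (T_P i le_in).
Qed.

End BimoduleRetract.

(** * Retracts of algebras *)

Section AugmentedRetracts.
Variables (K : comNzRingType) (A D : algType K).
Variables (kappa : {lrmorphism A -> D}) (theta : {lrmorphism D -> A}).
Hypothesis kappaK : cancel theta kappa.

Lemma mul_bimodule (R : algType K) : is_bimodule (fun a x : R => a * x) (fun x b : R => x * b).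
Proof.
by do !split=> *; rewrite ?mulrDr ?mulrDl ?mulrA ?mul1r ?mulr1 // mulr_algl mulr_algr.
Qed.

Lemma augmentation_bimodule (R : algType K) (eps : {lrmorphism R -> K^o}) :
  is_bimodule (fun a (k : K) => eps a * k) (fun (k : K) a => k * eps a).
Proof.
do !split=> *; rewrite ?rmorphD ?rmorphM ?rmorph1 /= ?mulrDr ?mulrDl ?mulrA ?mul1r ?mulr1 //.
exact: mulrC.
Qed.

Lemma biFPn_retract n : biFPn A n -> biFPn D n.
Proof.
apply: (bimod_FPn_retract _ _ _ kappa theta kappaK _ _ _ _ _ _ kappa theta
  (mul_bimodule A) (mul_bimodule D)) => //.
- by split=> *; rewrite ?rmorphD ?rmorphM.
- by split=> *; rewrite ?rmorphD ?rmorphM.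
Qed.

Variables (eps : {lrmorphism A -> K^o}) (epsD : {lrmorphism D -> K^o}).
Hypothesis epsDK : forall a, epsD (kappa a) = eps a.

Lemma weak_biFPn_retract n : weak_biFPn eps n -> weak_biFPn epsD n.
Proof.
apply: (bimod_FPn_retract _ _ _ kappa theta kappaK _ _ _ _ _ _ id id
  (augmentation_bimodule eps) (augmentation_bimodule epsD)) => //.
- by split=> * /=; rewrite ?epsDK.
- by split=> * /=; rewrite -?epsDK ?kappaK.
Qed.

Lemma leftFPn_retract n : leftFPn eps n -> leftFPn epsD n.
Proof.
apply: (left_FPn_retract _ _ kappa theta (rmorphD kappa) (rmorphM kappa) (rmorphD theta)
  (rmorphM theta) (rmorph1 theta) kappaK) => [|a x]; last by rewrite epsDK.
by split=> [r x y|r s x|r s x|x];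
  rewrite ?mulrDr ?rmorphD ?mulrDl ?rmorphM ?mulrA ?rmorph1 ?mul1r.
Qed.

Lemma rightFPn_retract n : rightFPn eps n -> rightFPn epsD n.
Proof.
apply: (left_FPn_retract (A^c) (D^c) kappa theta (rmorphD kappa)
  (fun x y => rmorphM kappa y x) (rmorphD theta) (fun x y => rmorphM theta y x)
  (rmorph1 theta) kappaK) => [|a x]; last by rewrite epsDK.
split=> [r x y|r s x|r s x|x]; rewrite ?mulrDl ?rmorphD ?mulrDr //=.
- by rewrite rmorphM mulrA.
- by rewrite rmorph1 mulr1.
Qed.

End AugmentedRetracts.

Theorem mainTheorem5 (K : comNzRingType) (n : nat) (A D : algType K) :
  (* (i) retracts of bi-FP_n algebras are bi-FP_n *)
  (forall (kappa : {lrmorphism A -> D}) (theta : {lrmorphism D -> A}),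
     (forall x : D, kappa (theta x) = x) ->
     biFPn A n -> biFPn D n) /\
  (* (ii) augmented retracts *)
  (forall (eps : {lrmorphism A -> K^o}) (epsD : {lrmorphism D -> K^o}),
     augmentation eps -> augmentation epsD ->
     forall (kappa : {lrmorphism A -> D}) (theta : {lrmorphism D -> A}),
       (forall x : D, kappa (theta x) = x) ->
       (forall a : A, epsD (kappa a) = eps a) ->
       [/\ leftFPn eps n -> leftFPn epsD n,
           rightFPn eps n -> rightFPn epsD n &
           weak_biFPn eps n -> weak_biFPn epsD n]).
Proof.
split=> [kappa theta kappaK | eps epsD _ _ kappa theta kappaK epsDK].
  exact: (biFPn_retract kappa theta kappaK).
split; [exact: (leftFPn_retract kappa theta kappaK epsD epsDK) |
  exact: (rightFPn_retract kappa theta kappaK epsD epsDK) |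
  exact: (weak_biFPn_retract kappa theta kappaK epsD epsDK)].
Qed.
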